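(* There exists an order-reversing embedding $\mathcal{E} \to \mathcal{G}$.
   Context: A pca is a set with a partial binary application operation containing distinct $\mathrm{s},\mathrm{k}$ with $\mathrm{k}ab\downarrow=a$, $\mathrm{s}ab\downarrow$, $\mathrm{s}abc\simeq(ac)(bc)$. An embedding of pcas is an injective map $f$ with: if $ab$ is defined then $f(a)f(b)$ is defined and equals $f(ab)$. $\mathcal{G}$ is $\mathcal{P}(\omega)$ with application $A\cdot B=\{n:\exists u\,(\langle n,u\rangle\in A\wedge D_u\subseteq B)\}$, where $\langle\cdot,\cdot\rangle$ is a bijective computable pairing with $\langle 0,0\rangle=0$ and $D_u$ is the finite set with canonical code $u$. $\mathcal{E}$ is the sub-pca consisting of the c.e. sets. An embedding $f$ is order-reversing if for all $A\subseteq B$ in its domain, $f(B)\subseteq f(A)$. *)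

From Stdlib Require Import Arith List.
Import ListNotations.

Inductive PR : nat -> Type :=
| PRzero (k : nat) : PR k
| PRsucc : PR 1
| PRproj (k i : nat) : PR k
| PRcomp (k m : nat) : PR m -> list (PR k) -> PR k
| PRrec (k : nat) : PR k -> PR (S (S k)) -> PR (S k)
| PRmu (k : nat) : PR (S k) -> PR k.

Inductive PR_eval : forall k, PR k -> list nat -> nat -> Prop :=
| ev_zero k xs : length xs = k -> PR_eval k (PRzero k) xs 0
| ev_succ x : PR_eval 1 PRsucc [x] (S x)
| ev_proj k i xs : length xs = k -> i < k ->
    PR_eval k (PRproj k i) xs (nth i xs 0)
| ev_comp k m g hs xs ys y : length xs = k -> length hs = m ->
    Forall2 (fun h y => PR_eval k h xs y) hs ys ->
    PR_eval m g ys y -> PR_eval k (PRcomp k m g hs) xs y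
| ev_rec0 k g h xs y : PR_eval k g xs y -> PR_eval (S k) (PRrec k g h) (0 :: xs) y
| ev_recS k g h n xs z y : PR_eval (S k) (PRrec k g h) (n :: xs) z ->
    PR_eval (S (S k)) h (n :: z :: xs) y ->
    PR_eval (S k) (PRrec k g h) (S n :: xs) y
| ev_mu k g xs y : PR_eval (S k) g (y :: xs) 0 ->
    (forall z, z < y -> exists v, v <> 0 /\ PR_eval (S k) g (z :: xs) v) ->
    PR_eval k (PRmu k g) xs y.

Definition ce (A : nat -> Prop) : Prop :=
  exists p : PR 1, forall n, A n <-> exists y, PR_eval 1 p [n] y.

Definition cpair (x y : nat) : nat := (x + y) * (x + y + 1) / 2 + y.

(* Canonical finite sets: D_u = { i | bit i of u is 1 }. *)
Definition D (u : nat) (i : nat) : Prop := Nat.testbit u i = true.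

(* Application in G = P(omega): A.B = { n | exists u, <n,u> in A /\ D_u subset B }. *)
Definition gapp (A B : nat -> Prop) : nat -> Prop :=
  fun n => exists u, A (cpair n u) /\ (forall i, D u i -> B i).

(* An embedding E -> G (E is total, G is total, so the partial-application
   condition reduces to preservation of application), defined on c.e. sets. *)
Definition embedding_E_G (f : (nat -> Prop) -> (nat -> Prop)) : Prop :=
  (forall A B, ce A -> ce B -> f A = f B -> A = B) /\
  (forall A B, ce A -> ce B -> f (gapp A B) = gapp (f A) (f B)).

Definition order_reversing_on_E (f : (nat -> Prop) -> (nat -> Prop)) : Prop :=
  forall A B, ce A -> ce B -> (forall n, A n -> B n) -> (forall n, f B n -> f A n).

(* For a family of sets W_i with injective codes (here the c.e. sets, indexed by
   programs), send A to the set emb A of codes of all valid inclusions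
   A·W_{i_1}···W_{i_k} ⊆ W_j: a tag of j records A ⊆ W_j, and <n, {tag i}> is in
   emb A iff n is in emb (A·W_i).  Application is monotone, so shrinking A
   validates more inclusions and emb is antitone.  As tag j ∈ emb W_i iff
   W_i ⊆ W_j, emb is injective on the W_i, and emb (A·W_i) = emb A · emb W_i:
   the only finite sets D_u usable on the right are singletons {tag j} with
   W_i ⊆ W_j, and then A·W_i ⊆ A·W_j. *)

From Stdlib Require Import Arith List Lia Cantor Eqdep_dec.
From Stdlib Require Import FunctionalExtensionality PropExtensionality.
Import ListNotations.

Local Notation "A ⊆ B" := (forall n : nat, A n -> B n) (at level 70).

Lemma pred_ext (A B : nat -> Prop) : (forall n, A n <-> B n) -> A = B.
Proof.
  intro AB. apply functional_extensionality. intro n.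
  apply propositional_extensionality, AB.
Qed.

Lemma cpair_to_nat x y : cpair x y = Cantor.to_nat (x, y).
Proof.
  rewrite Cantor.to_nat_spec2. unfold cpair.
  replace ((y + x) * S (y + x)) with ((x + y) * (x + y + 1)) by ring. lia.
Qed.

Lemma cpair_inj x y x' y' : cpair x y = cpair x' y' -> x = x' /\ y = y'.
Proof.
  rewrite !cpair_to_nat. intros E%Cantor.to_nat_inj. now injection E.
Qed.

Lemma cpair_ge_r x y : y <= cpair x y.
Proof. unfold cpair. lia. Qed.

Lemma D_pow2 t m : D (2 ^ t) m <-> m = t.
Proof. unfold D. rewrite Nat.pow2_bits_eqb, Nat.eqb_eq. split; auto. Qed.

Lemma pow2_neq_3 t : 2 ^ t <> 3.
Proof. destruct t as [|[|t]]; simpl; lia. Qed.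

Lemma gapp_mono A A' B B' : A ⊆ A' -> B ⊆ B' -> gapp A B ⊆ gapp A' B'.
Proof.
  intros AA' BB' n [u [Hu Du]]. exists u. split; auto.
Qed.

Fixpoint list_code (l : list nat) : nat :=
  match l with
  | [] => 0
  | x :: l => S (Cantor.to_nat (x, list_code l))
  end.

Lemma list_code_inj l l' : list_code l = list_code l' -> l = l'.
Proof.
  revert l'. induction l as [|x l IH]; intros [|x' l'] E; try discriminate; auto.
  apply Nat.succ_inj, Cantor.to_nat_inj in E. injection E as -> E.
  now rewrite (IH l' E).
Qed.

Fixpoint PR_code {k} (p : PR k) : nat :=
  match p with
  | PRzero k => list_code [0; k]
  | PRsucc => list_code [1]
  | PRproj k i => list_code [2; k; i]
  | PRcomp k m g hs => list_code (3 :: k :: m :: PR_code g :: map (@PR_code k) hs)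
  | PRrec k g h => list_code [4; k; PR_code g; PR_code h]
  | PRmu k g => list_code [5; k; PR_code g]
  end.

(* The generated [PR_ind] has no induction hypothesis for the list of
   functions in a composition. *)
Section PR_nested_ind.
Variable P : forall k, PR k -> Prop.
Hypothesis Hzero : forall k, P k (PRzero k).
Hypothesis Hsucc : P 1 PRsucc.
Hypothesis Hproj : forall k i, P k (PRproj k i).
Hypothesis Hcomp : forall k m g hs, P m g -> Forall (P k) hs -> P k (PRcomp k m g hs).
Hypothesis Hrec : forall k g h, P k g -> P (S (S k)) h -> P (S k) (PRrec k g h).
Hypothesis Hmu : forall k g, P (S k) g -> P k (PRmu k g).

Fixpoint PR_nested_ind k (p : PR k) : P k p :=
  match p with
  | PRzero k => Hzero k
  | PRsucc => Hsucc
  | PRproj k i => Hproj k i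
  | PRcomp k m g hs =>
      Hcomp k m g hs (PR_nested_ind m g)
        ((fix all (l : list (PR k)) : Forall (P k) l :=
            match l with
            | [] => Forall_nil _
            | h :: l => Forall_cons h (PR_nested_ind k h) (all l)
            end) hs)
  | PRrec k g h => Hrec k g h (PR_nested_ind k g) (PR_nested_ind (S (S k)) h)
  | PRmu k g => Hmu k g (PR_nested_ind (S k) g)
  end.
End PR_nested_ind.

Lemma map_inj_Forall {A B} (f : A -> B) l :
  Forall (fun x => forall y, f x = f y -> x = y) l ->
  forall l', map f l = map f l' -> l = l'.
Proof.
  induction 1 as [|x l Hx _ IH]; intros [|y l'] E; try discriminate; auto.
  injection E as Exy El. now rewrite (Hx y Exy), (IH l' El).
Qed.

Lemma existT_PR_inj k (p q : PR k) : existT PR k p = existT PR k q -> p = q.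
Proof. apply inj_pair2_eq_dec, Nat.eq_dec. Qed.

Lemma PR_code_inj_dep k (p : PR k) k' (q : PR k') :
  PR_code p = PR_code q -> existT PR k p = existT PR k' q.
Proof.
  revert k p k' q.
  apply (PR_nested_ind (fun k p => forall k' q,
    PR_code p = PR_code q -> existT PR k p = existT PR k' q));
    [intros k | | intros k i | intros k m g hs IHg IHhs
    | intros k g h IHg IHh | intros k g IHg];
    intros k' q E;
    destruct q as [k1 | | k1 i1 | k1 m1 g1 hs1 | k1 g1 h1 | k1 g1];
    cbn [PR_code] in E; apply list_code_inj in E; try discriminate E.
  - now injection E as ->.
  - reflexivity.
  - now injection E as -> ->.
  - injection E as -> -> Eg Ehs.
    apply IHg, existT_PR_inj in Eg as ->.
    enough (hs = hs1) as -> by reflexivity.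
    apply (map_inj_Forall PR_code hs); [|exact Ehs].
    eapply Forall_impl; [|exact IHhs].
    intros h' IHh' h'' Eh'. exact (existT_PR_inj _ _ _ (IHh' _ _ Eh')).
  - injection E as -> Eg Eh.
    apply IHg, existT_PR_inj in Eg as ->.
    apply IHh, existT_PR_inj in Eh as ->.
    reflexivity.
  - injection E as -> Eg.
    apply IHg, existT_PR_inj in Eg as ->.
    reflexivity.
Qed.

Lemma PR_code_inj k (p q : PR k) : PR_code p = PR_code q -> p = q.
Proof. intros E. apply existT_PR_inj, PR_code_inj_dep, E. Qed.

Section Antitone_embedding.
Variable I : Type.
Variable W : I -> nat -> Prop.
Variable code : I -> nat.
Hypothesis code_inj : forall i j, code i = code j -> i = j.

(* 3 is not a power of 2, so tags are not of the form <n, {t}>; and 0 ∈ D_3,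
   while 0 is in no emb A. *)
Definition tag (i : I) : nat := cpair (code i) 3.

Inductive emb : (nat -> Prop) -> nat -> Prop :=
| emb_tag_intro A i : A ⊆ W i -> emb A (tag i)
| emb_pair_intro A i n : emb (gapp A (W i)) n -> emb A (cpair n (2 ^ tag i)).

Lemma tag_inj i j : tag i = tag j -> i = j.
Proof. intros E%cpair_inj. apply code_inj, E. Qed.

Lemma tag_neq_pair i n t : tag i <> cpair n (2 ^ t).
Proof. intros E%cpair_inj. destruct E as [_ E]. now apply (pow2_neq_3 t). Qed.

Lemma emb_antitone A B : B ⊆ A -> emb A ⊆ emb B.
Proof.
  intros BA x Hx. revert B BA.
  induction Hx as [A i AW | A i n _ IH]; intros B BA.
  - apply emb_tag_intro. auto.
  - apply emb_pair_intro, IH, gapp_mono; auto.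
Qed.

Lemma emb_inv A x : emb A x ->
  (exists i, x = tag i /\ A ⊆ W i) \/
  (exists i n, x = cpair n (2 ^ tag i) /\ emb (gapp A (W i)) n).
Proof. destruct 1; [left | right]; eauto. Qed.

Lemma emb_not_0 A : ~ emb A 0.
Proof.
  intros [[j [E _]] | [j [n [E _]]]]%emb_inv.
  - pose proof (cpair_ge_r (code j) 3). unfold tag in E. lia.
  - assert (2 ^ tag j <> 0) by (apply Nat.pow_nonzero; lia).
    pose proof (cpair_ge_r n (2 ^ tag j)). lia.
Qed.

Lemma emb_tag A i : emb A (tag i) <-> A ⊆ W i.
Proof.
  split; [|apply emb_tag_intro].
  intros [[j [Ej AW]] | [j [n [Ej _]]]]%emb_inv.
  - now apply tag_inj in Ej as <-.
  - now apply tag_neq_pair in Ej.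
Qed.

Lemma emb_gapp A i : emb (gapp A (W i)) = gapp (emb A) (emb (W i)).
Proof.
  apply pred_ext. intros n. split.
  - intros Hn. exists (2 ^ tag i). split.
    + now apply emb_pair_intro.
    + intros m ->%D_pow2. now apply emb_tag.
  - intros [u [Hu Du]].
    apply emb_inv in Hu as [[j [Ej _]] | [j [n' [Ej Hn']]]].
    + apply cpair_inj in Ej as [_ ->].
      exfalso. exact (emb_not_0 (W i) (Du 0 eq_refl)).
    + apply cpair_inj in Ej as [-> ->].
      assert (Wij : W i ⊆ W j) by (apply emb_tag, Du, D_pow2; reflexivity).
      revert Hn'. apply emb_antitone, gapp_mono; auto.
Qed.

Lemma emb_W_inj i j : emb (W i) = emb (W j) -> W i = W j.
Proof.
  intros E.
  assert (Wij : W i ⊆ W j) by (apply emb_tag; rewrite E; now apply emb_tag).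
  assert (Wji : W j ⊆ W i) by (apply emb_tag; rewrite <- E; now apply emb_tag).
  apply pred_ext. split; auto.
Qed.

End Antitone_embedding.

Definition PR_dom (p : PR 1) (n : nat) : Prop := exists y, PR_eval 1 p [n] y.

Lemma ce_PR_dom A : ce A -> exists p, A = PR_dom p.
Proof. intros [p Hp]. exists p. apply pred_ext, Hp. Qed.

Theorem theorem7p12 :
  exists f : (nat -> Prop) -> (nat -> Prop),
    embedding_E_G f /\ order_reversing_on_E f.
Proof.
  exists (emb _ PR_dom (@PR_code 1)). split; [split|].
  - intros A B [p ->]%ce_PR_dom [q ->]%ce_PR_dom.
    apply emb_W_inj, PR_code_inj.
  - intros A B _ [p ->]%ce_PR_dom.
    apply emb_gapp, PR_code_inj.
  - intros A B _ _ AB. now apply emb_antitone.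
Qed.
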